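(* Let $w,s,t$ be positive integers with $t\mid s$ and $t\ne s$. Let $p$ be a prime and $\alpha$ a positive integer with $p^\alpha\mid s/t$ but $p^{\alpha+1}\nmid s/t$. Assume that either $p\ne2$, or $p=2$ and $\alpha>1$. For $l\in I\big(s/(p^\alpha t)\big)$ set $$f(l)=\sum_{k\in\{p^{\alpha-1}l,\;p^{\alpha}l\}}(-1)^{\omega(s/(kt))}(-1)^{ktw}\binom{k(tw-1)-1}{k-1}.$$ Then $f(l)\equiv0\pmod{p^{2\alpha}}$ for every $l\in I\big(s/(p^\alpha t)\big)$.
   Context: For a positive integer $n$, $\omega(n)$ is the number of distinct primes dividing $n$, and $I(n)=\{k\in\mathbb{N}: k\mid n \text{ and } n/k \text{ is square-free}\}$. Binomial coefficients $\binom{n}{m}$ with $n\in\mathbb{Z}$, $m\ge0$ mean $n(n-1)\cdots(n-m+1)/m!$. *)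

From mathcomp Require Import all_boot all_order all_algebra.
Set Implicit Arguments. Unset Strict Implicit. Unset Printing Implicit Defensive.
Import Order.TTheory GRing.Theory Num.Theory.

Definition omega (n : nat) : nat := size (primes n).

Definition squarefree (n : nat) : Prop :=
  (0 < n)%N /\ forall d : nat, (d * d %| n)%N -> d = 1%N.

Definition inI (n k : nat) : Prop :=
  (0 < k)%N /\ (k %| n)%N /\ squarefree (n %/ k).

(* generalized binomial coefficient binom(n, m) = n(n-1)...(n-m+1)/m!, n : int
   (the division is exact). *)
Definition binz (n : int) (m : nat) : int :=
  ((\prod_(i < m) (n - (i : nat)%:Z)) %/ (m`!)%:Z)%Z.

Definition fterm (s t w k : nat) : int :=
  ((-1) ^+ omega (s %/ (k * t)) * (-1) ^+ (k * t * w)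
   * binz (k%:Z * ((t * w)%:Z - 1) - 1) k.-1)%R.

Definition fsum (s t w p a l : nat) : int :=
  (fterm s t w (p ^ a.-1 * l) + fterm s t w (p ^ a * l))%R.

From mathcomp Require Import all_boot all_order all_algebra.
From mathcomp Require Import zify ring.
Set Implicit Arguments. Unset Strict Implicit. Unset Printing Implicit Defensive.
Import Order.TTheory GRing.Theory Num.Theory.
Local Open Scope ring_scope.

(* Write N = tw - 1 and b(k) = binom(kN - 1, k - 1). With k = p^(α-1) l, the two
   summands of f(l) carry opposite signs, so f(l) = ±(b(pk) - b(k)). Splitting
   [1, pk) into the multiples of p and the set J of integers prime to p, and
   comparing b(pk) (pk - 1)! with b(k) (k - 1)!, gives b(pk) D = b(k) E where D
   and E are the products of j and of pkN - j over J. Pairing j with pk - j shows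
   E = D mod (pk)^2; this needs |J| = (p - 1) k to be even, which is where p = 2
   requires α > 1. Since D is prime to p, p^(2α) divides b(pk) - b(k). *)

Lemma prodz_sub_ffact (n m : nat) :
  \prod_(i < m) (n%:Z - (i : nat)%:Z) = (n ^_ m)%N%:Z.
Proof.
elim: m n => [|m IH] n; first by rewrite big_ord0 ffactn0.
rewrite big_ord_recl /= subr0.
case: n => [|n]; first by rewrite mul0r ffact0n.
rewrite ffactSS PoszM -IH; congr (_ * _); apply: eq_bigr => i _.
rewrite /bump /= add1n; lia.
Qed.

Lemma fact_dvdz_prod_sub (n : int) (m : nat) :
  ((m`!)%:Z %| \prod_(i < m) (n - (i : nat)%:Z))%Z.
Proof.
have fact_dvd_ffact x : ((m`!)%:Z %| (x ^_ m)%N%:Z)%Z.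
  by rewrite -bin_ffact PoszM dvdz_mull.
case: n => x; first by rewrite prodz_sub_ffact.
rewrite NegzE (reindex_inj rev_ord_inj) /=.
have -> : \prod_(i < m) (- x.+1%:Z - (m - i.+1)%N%:Z)
        = (-1) ^+ m * \prod_(i < m) ((x + m)%N%:Z - (i : nat)%:Z).
  have -> : (-1) ^+ m = \prod_(i < m) (-1 : int) by rewrite prodr_const card_ord.
  rewrite -big_split /=.
  by apply: eq_bigr => i _; have := ltn_ord i; lia.
by rewrite prodz_sub_ffact dvdz_mull.
Qed.

Lemma binz_mul_fact (n : int) (m : nat) :
  binz n m * (m`!)%:Z = \prod_(i < m) (n - (i : nat)%:Z).
Proof. by rewrite /binz divzK // fact_dvdz_prod_sub. Qed.

Definition binkN (N : int) (k : nat) : int := binz (k%:Z * N - 1) k.-1.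

Lemma binkN_mul_fact (N : int) (k : nat) :
  binkN N k * ((k.-1)`!)%:Z = \prod_(1 <= j < k) (k%:Z * N - j%:Z).
Proof.
rewrite /binkN binz_mul_fact big_add1 big_mkord.
by apply: eq_bigr => i _; lia.
Qed.

Lemma fact_pred_prodz (k : nat) : ((k.-1)`!)%:Z = \prod_(1 <= j < k) j%:Z.
Proof.
case: k => [|k]; first by rewrite big_geq.
by rewrite fact_prod (big_morph Posz PoszM (erefl 1%:Z)).
Qed.

Definition prime_to (p n : nat) : seq nat :=
  [seq j <- index_iota 1 n | ~~ (p %| j)%N].

Lemma big_dvdn_index_iota (R : comPzSemiRingType) (F : nat -> R) (p k : nat) : (0 < p)%N ->
  \prod_(1 <= j < p * k | (p %| j)%N) F j = \prod_(1 <= i < k) F (p * i)%N.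
Proof.
move=> p_gt0; elim: k => [|k IH]; first by rewrite muln0 !big_geq.
case: k IH => [|k] IH.
  rewrite muln1 [RHS]big_geq // big_nat_cond big1 // => j /andP[/andP[j_gt0 j_lt] p_dvd].
  by have := dvdn_leq j_gt0 p_dvd; rewrite leqNgt j_lt.
rewrite (@big_cat_nat _ _ _ (p * k.+1)) //=; last first.
- by rewrite leq_pmul2l.
- by rewrite muln_gt0 p_gt0.
rewrite IH [RHS]big_nat_recr //=; congr (_ * _).
rewrite big_ltn_cond ?ltn_pmul2l // dvdn_mulr //= big_nat_cond big1 ?mulr1 //.
move=> j /andP[/andP[j_gt j_lt] /dvdnP [q j_eq]].
by move: j_gt j_lt; rewrite j_eq (mulnC q p) !ltn_pmul2l //; lia.
Qed.

Lemma big_prime_to_split (R : comPzSemiRingType) (F : nat -> R) (p k : nat) : (0 < p)%N ->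
  \prod_(1 <= j < p * k) F j
  = \prod_(1 <= i < k) F (p * i)%N * \prod_(j <- prime_to p (p * k)) F j.
Proof.
by move=> p_gt0; rewrite (bigID (dvdn p)) /= big_dvdn_index_iota // big_filter.
Qed.

Lemma binkN_pmul (N : int) (p k : nat) : (0 < p)%N -> (0 < k)%N ->
  binkN N (p * k) * \prod_(j <- prime_to p (p * k)) j%:Z
  = binkN N k * \prod_(j <- prime_to p (p * k)) ((p * k)%N%:Z * N - j%:Z).
Proof.
move=> p_gt0 k_gt0.
set D := \prod_(j <- _) j%:Z; set E := \prod_(j <- _) (_ - _).
set c := p%:Z ^+ (k - 1) * ((k.-1)`!)%:Z.
have c_neq0 : c != 0.
  by rewrite mulf_neq0 ?expf_neq0 // -lt0n ?fact_gt0 //; lia.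
have fact_pk : (((p * k).-1)`!)%:Z = c * D.
  rewrite /c !fact_pred_prodz big_prime_to_split //; congr (_ * _).
  by rewrite -prodr_const_nat -big_split; apply: eq_bigr => i _; rewrite PoszM.
have prod_pk : \prod_(1 <= j < p * k) ((p * k)%N%:Z * N - j%:Z)
             = p%:Z ^+ (k - 1) * (binkN N k * ((k.-1)`!)%:Z) * E.
  rewrite big_prime_to_split // binkN_mul_fact; congr (_ * _).
  by rewrite -prodr_const_nat -big_split; apply: eq_bigr => i _ /=; rewrite !PoszM; ring.
apply: (mulIf c_neq0).
transitivity (binkN N (p * k) * (((p * k).-1)`!)%:Z); first by rewrite fact_pk; ring.
by rewrite binkN_mul_fact prod_pk /c; ring.
Qed.

Lemma rev_index_iota1 (n : nat) :
  rev (index_iota 1 n) = map (subn n) (index_iota 1 n).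
Proof.
apply: (@eq_from_nth _ 0%N); first by rewrite size_rev size_map.
rewrite /index_iota size_rev size_iota => i i_lt.
by rewrite nth_rev ?size_iota // (nth_map 0%N) ?size_iota // !nth_iota //; lia.
Qed.

Lemma prime_to_rev (p n : nat) : (p %| n)%N ->
  rev (prime_to p n) = map (subn n) (prime_to p n).
Proof.
move=> p_dvd_n; rewrite /prime_to -filter_rev rev_index_iota1 filter_map.
congr map; apply: eq_in_filter => j; rewrite mem_index_iota => /andP[_ j_lt] /=.
by rewrite dvdn_subr // ltnW.
Qed.

Lemma sym_odd_size_half (n : nat) (s : seq nat) :
  rev s = map (subn n) s -> odd (size s) -> exists2 x, x \in s & n = x.*2.
Proof.
move=> s_sym s_odd; set h := (size s)./2.
have size_s : size s = h.*2.+1.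
  by rewrite /h -{1}(odd_double_half (size s)) s_odd add1n.
have h_lt : (h < size s)%N by rewrite size_s ltnS -addnn leq_addr.
exists (nth 0%N s h); first exact: mem_nth.
have := congr1 (nth 0%N ^~ h) s_sym.
rewrite nth_rev // (nth_map 0%N) // size_s subSS -addnn addnK.
by lia.
Qed.

Lemma prime_to_size_even (p k : nat) : prime p -> (p != 2) || ~~ odd k ->
  ~~ odd (size (prime_to p (p * k))).
Proof.
move=> p_pr p_cond; apply/negP.
move/(sym_odd_size_half (prime_to_rev (dvdn_mulr k (dvdnn p)))) => [x].
rewrite mem_filter => /andP[p_ndvd_x _] pk_eq.
case: (even_prime p_pr) => [p2 | p_odd].
  have k_eq : k = x by move: pk_eq; rewrite p2; lia.
  by move: p_cond p_ndvd_x; rewrite p2 k_eq dvdn2 /= => ->.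
have : (p %| x * 2)%N by rewrite muln2 -pk_eq dvdn_mulr.
by rewrite Gauss_dvdl ?coprimen2 // (negbTE p_ndvd_x).
Qed.

Lemma big_sym_pair (R : comPzSemiRingType) (F : nat -> R) (n : nat) (s : seq nat) :
  rev s = map (subn n) s -> ~~ odd (size s) ->
  \prod_(j <- s) F j = \prod_(j <- take (size s)./2 s) (F j * F (n - j)%N).
Proof.
move=> s_sym s_even; set h := (size s)./2.
have size_s : size s = h.*2.
  by rewrite /h -{1}(odd_double_half (size s)) (negbTE s_even) add0n.
have drop_s : drop h s = rev (map (subn n) (take h s)).
  by rewrite map_take -s_sym take_rev revK size_s -addnn addnK.
by rewrite -[in LHS](cat_take_drop h s) big_cat drop_s big_rev big_map big_split.
Qed.

Lemma dvdz_prod_sub (I : eqType) (r : seq I) (f g : I -> int) (d : int) :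
  {in r, forall x, (d %| f x - g x)%Z} ->
  (d %| \prod_(x <- r) f x - \prod_(x <- r) g x)%Z.
Proof.
elim: r => [|a r IH] dvd_fg; first by rewrite !big_nil subrr dvdz0.
rewrite !big_cons.
have -> : f a * \prod_(x <- r) f x - g a * \prod_(x <- r) g x
  = f a * (\prod_(x <- r) f x - \prod_(x <- r) g x) + (f a - g a) * \prod_(x <- r) g x
  by ring.
apply: rpredD; last by rewrite dvdz_mulr ?dvd_fg ?mem_head.
by rewrite dvdz_mull // IH // => x x_r; rewrite dvd_fg // inE x_r orbT.
Qed.

(* Pairing [j] with [n - j], [(n N - j) (n N - (n - j)) = j (n - j) + n^2 (N^2 - N)]. *)
Lemma prod_sym_cong (N : int) (n : nat) (s : seq nat) :
  {in s, forall j, (j <= n)%N} -> rev s = map (subn n) s -> ~~ odd (size s) ->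
  (n%:Z ^+ 2 %| \prod_(j <- s) (n%:Z * N - j%:Z) - \prod_(j <- s) j%:Z)%Z.
Proof.
move=> s_le s_sym s_even; rewrite !(big_sym_pair _ s_sym s_even).
apply: dvdz_prod_sub => j /mem_take /s_le j_le.
have -> : (n - j)%N%:Z = n%:Z - j%:Z by lia.
by apply/dvdzP; exists (N ^+ 2 - N); ring.
Qed.

Lemma coprimez_prod_prime_to (p n e : nat) : prime p ->
  coprimez (p ^ e)%N%:Z (\prod_(j <- prime_to p n) j%:Z).
Proof.
move=> p_pr; rewrite -(big_morph Posz PoszM (erefl 1%:Z)) coprimezE !absz_nat.
apply: coprimeXl; rewrite big_seq; elim/big_ind: _ => [|x y cx cy|j].
- exact: coprimen1.
- by rewrite coprimeMr cx cy.
- by rewrite mem_filter prime_coprime // => /andP[].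
Qed.

Lemma binkN_pmul_cong (N : int) (p k e : nat) :
  prime p -> (0 < k)%N -> (p != 2) || ~~ odd k -> (p ^ e %| p * k)%N ->
  ((p ^ (2 * e))%N%:Z %| binkN N (p * k) - binkN N k)%Z.
Proof.
move=> p_pr k_gt0 p_cond pe_dvd.
pose D := \prod_(j <- prime_to p (p * k)) j%:Z.
pose E := \prod_(j <- prime_to p (p * k)) ((p * k)%N%:Z * N - j%:Z).
have E_D : ((p * k)%N%:Z ^+ 2 %| E - D)%Z.
  apply: prod_sym_cong; last exact: prime_to_size_even.
    by move=> j; rewrite mem_filter mem_index_iota => /and3P[_ _ /ltnW].
  exact/prime_to_rev/dvdn_mulr.
have diff_D : (binkN N (p * k) - binkN N k) * D = binkN N k * (E - D).
  by rewrite mulrBl binkN_pmul ?(prime_gt0 p_pr) // mulrBr.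
have sq : ((p * k) ^ 2)%N%:Z = (p * k)%N%:Z ^+ 2 by rewrite -natz natrX natz.
have cop := coprimez_prod_prime_to (p * k) (2 * e) p_pr.
rewrite -(Gauss_dvdzl (binkN N (p * k) - binkN N k) cop) diff_D.
rewrite dvdz_mull // (dvdz_trans _ E_D) // -sq (mulnC 2) expnM.
exact: dvdn_exp2r.
Qed.

Lemma omega_mul_prime (p r : nat) : prime p -> (0 < r)%N -> ~~ (p %| r)%N ->
  omega (p * r) = (omega r).+1.
Proof.
move=> p_pr r_gt0 p_ndvd; rewrite /omega.
suff /perm_size -> : perm_eq (primes (p * r)) (p :: primes r) by [].
apply: uniq_perm; first exact: primes_uniq.
  by rewrite /= primes_uniq mem_primes p_pr r_gt0 (negbTE p_ndvd).
move=> q; rewrite inE !mem_primes muln_gt0 prime_gt0 // r_gt0 /=.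
case q_pr: (prime q) => /=; last first.
  by rewrite orbF; apply/esym/eqP => q_p; rewrite q_p p_pr in q_pr.
by rewrite Euclid_dvdM // dvdn_prime2.
Qed.

Lemma dvdn_exact_pexp_cofactor (s t p e l : nat) :
  prime p -> (0 < t)%N -> (t %| s)%N ->
  (p ^ e %| s %/ t)%N -> ~~ (p ^ e.+1 %| s %/ t)%N -> (l %| s %/ (p ^ e * t))%N ->
  exists2 r, s = (r * (p ^ e * l * t))%N & ~~ (p %| r)%N.
Proof.
move=> p_pr t_gt0 /dvdnP[u ->] pe_dvd pe1_ndvd l_dvd.
rewrite mulnK // in pe_dvd pe1_ndvd.
have [m u_eq] := dvdnP pe_dvd.
rewrite u_eq -mulnA mulnK ?muln_gt0 ?expn_gt0 ?(prime_gt0 p_pr) // in l_dvd.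
have [r m_eq] := dvdnP l_dvd.
exists r; first by rewrite u_eq m_eq; ring.
by apply: contra pe1_ndvd => p_dvd_r; rewrite u_eq m_eq expnS dvdn_mul ?dvdn_mulr.
Qed.

Lemma fterm_pair (s t w p k r : nat) :
  prime p -> (0 < k * t)%N -> s = (r * (p * k * t))%N -> ~~ (p %| r)%N ->
  (p != 2) || ~~ odd k ->
  fterm s t w k + fterm s t w (p * k)
  = (-1) ^+ omega r * (-1) ^+ (k * t * w)
    * (binkN ((t * w)%:Z - 1) (p * k) - binkN ((t * w)%:Z - 1) k).
Proof.
move=> p_pr kt_gt0 s_eq p_ndvd p_cond.
have r_gt0 : (0 < r)%N by case: r p_ndvd {s_eq} => //; rewrite dvdn0.
have omega_k : omega (s %/ (k * t)) = (omega r).+1.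
  by rewrite s_eq -mulnA (mulnCA r) mulnA mulnK // omega_mul_prime.
have omega_pk : omega (s %/ (p * k * t)) = omega r.
  by rewrite s_eq mulnK // -mulnA muln_gt0 prime_gt0.
have sign_pk : (-1) ^+ (p * k * t * w) = (-1) ^+ (k * t * w) :> int.
  rewrite -signr_odd -[RHS]signr_odd -!mulnA oddM [odd (k * _)]oddM.
  by case: (even_prime p_pr) p_cond => [-> /negbTE -> | ->].
by rewrite /fterm omega_k omega_pk sign_pk exprS /binkN; ring.
Qed.

Theorem lemma3p3 (w s t p a : nat)
  (hw : (0 < w)%N) (hs : (0 < s)%N) (ht : (0 < t)%N)
  (hts : (t %| s)%N) (hneq : t != s)
  (hp : prime p) (ha : (0 < a)%N)
  (hpa : (p ^ a %| s %/ t)%N) (hpa1 : ~~ (p ^ a.+1 %| s %/ t)%N)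
  (hp2 : p != 2%N \/ (1 < a)%N) :
  forall l : nat, inI (s %/ (p ^ a * t)) l ->
    ((p ^ (2 * a))%:Z %| fsum s t w p a l)%Z.
Proof.
move=> l [l_gt0 [l_dvd _]].
case: a ha hpa hpa1 hp2 l_dvd => [//|a] _ pa_dvd pa1_ndvd p_cond l_dvd.
set k := (p ^ a * l)%N.
have pk : (p ^ a.+1 * l = p * k)%N by rewrite expnS mulnA.
have k_gt0 : (0 < k)%N by rewrite muln_gt0 expn_gt0 prime_gt0.
have [r s_eq p_ndvd_r] := dvdn_exact_pexp_cofactor hp ht hts pa_dvd pa1_ndvd l_dvd.
rewrite pk in s_eq.
have k_cond : (p != 2) || ~~ odd k.
  case: p_cond => [-> // | a_gt0]; case: eqP => //= p2.
  by rewrite /k p2 oddM oddX orbF (_ : (a == 0) = false) //; lia.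
have kt_gt0 : (0 < k * t)%N by rewrite muln_gt0 k_gt0.
rewrite /fsum /= pk (fterm_pair w hp kt_gt0 s_eq p_ndvd_r k_cond).
apply/dvdz_mull/(binkN_pmul_cong _ hp k_gt0 k_cond).
by rewrite -pk dvdn_mulr.
Qed.
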